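(* Let $E$ be a finite-dimensional real vector space of dimension $p$ with dual $E^{*}$, and let $h$ be a generalized affine function on $E$ that is finite at at least one point. Represent $h$ as in the context by linearly independent $\eta_1,\dots,\eta_j\in E^{*}$ and scalars $\delta_1,\dots,\delta_j$, and extend $\eta_1,\dots,\eta_j$ to a basis $\eta_1,\dots,\eta_p$ of $E^{*}$. Suppose $h_n$ is a sequence of (real-valued) affine functions on $E$ converging pointwise to $h$. Then there are sequences of scalars $a_n$ and $b_{i,n}$ such that $$h_n(y)=a_n+\sum_{i=1}^{j}b_{i,n}\big(\langle y,\eta_i\rangle-\delta_i\big)+\sum_{i=j+1}^{p}b_{i,n}\langle y,\eta_i\rangle,\qquad y\in E,$$ and, as $n\to\infty$: (a) $b_{i,n}\to\infty$ for $1\le i\le j$; (b) $b_{i,n}/b_{i-1,n}\to0$ for $2\le i\le j$; (c) $b_{i,n}$ converges for $i>j$; (d) $a_n$ converges.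
   Context: A generalized affine function is a function $E\to\mathbb{R}\cup\{\pm\infty\}$ that is both convex and concave. Representation: linearly independent $\eta_1,\dots,\eta_j\in E^{*}$ ($j\ge0$) and scalars $\delta_i$, with $H_0=E$, $H_i=\{y\in H_{i-1}:\langle y,\eta_i\rangle=\delta_i\}$, $C_i^{+}=\{y\in H_{i-1}:\langle y,\eta_i\rangle>\delta_i\}$, $C_i^{-}=\{y\in H_{i-1}:\langle y,\eta_i\rangle<\delta_i\}$, all nonempty, such that $h=+\infty$ on each $C_i^{+}$, $h=-\infty$ on each $C_i^{-}$, and $h$ is affine or constant (possibly $\pm\infty$) on $H_j$ (every generalized affine function has such a representation). Empty sums are zero. *)

From HB Require Import structures.
From mathcomp Require Import all_boot all_order all_algebra.
From mathcomp Require Import all_classical all_reals all_analysis.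
Set Implicit Arguments. Unset Strict Implicit. Unset Printing Implicit Defensive.
Import Order.TTheory GRing.Theory Num.Theory numFieldNormedType.Exports.
Local Open Scope ring_scope.
Local Open Scope classical_set_scope.

(* E = R^p realised as row vectors 'rV[R]_p; the dual E^* is identified with
   'rV[R]_p via the standard pairing <y, eta> = sum_k y_k eta_k. *)
Definition pair (R : pzRingType) (p : nat) (y eta : 'rV[R]_p) : R :=
  \sum_(k < p) y 0 k * eta 0 k.

(* Convexity of an extended-real function: its epigraph is convex. *)
Definition econvex (R : realType) (p : nat) (h : 'rV[R]_p -> \bar R) : Prop :=
  forall (y1 y2 : 'rV[R]_p) (m1 m2 t : R), 0 <= t <= 1 ->
    (h y1 <= m1%:E)%E -> (h y2 <= m2%:E)%E ->
    (h (t *: y1 + (1 - t) *: y2)%R <= (t * m1 + (1 - t) * m2)%R%:E)%E.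

(* Concavity: its hypograph is convex. *)
Definition econcave (R : realType) (p : nat) (h : 'rV[R]_p -> \bar R) : Prop :=
  forall (y1 y2 : 'rV[R]_p) (m1 m2 t : R), 0 <= t <= 1 ->
    (m1%:E <= h y1)%E -> (m2%:E <= h y2)%E ->
    ((t * m1 + (1 - t) * m2)%R%:E <= h (t *: y1 + (1 - t) *: y2)%R)%E.

Definition gen_affine (R : realType) (p : nat) (h : 'rV[R]_p -> \bar R) : Prop :=
  econvex h /\ econcave h.

Definition affine_fun (R : realType) (p : nat) (f : 'rV[R]_p -> R) : Prop :=
  exists (c : R) (w : 'rV[R]_p), forall y, f y = c + pair y w.

(* The rows of B are eta_1, ..., eta_p (0-based: row 0 .. row p-1).
   Hset B delta i = H_i = { y : <y,eta_k> = delta_k for all k < i }. *)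
Definition Hset (R : realType) (p : nat) (B : 'M[R]_p) (delta : 'I_p -> R)
    (i : nat) : set 'rV[R]_p :=
  [set y | forall k : 'I_p, (k < i)%N -> pair y (row k B) = delta k].

(* C_i^+ and C_i^- (0-based index i corresponds to the paper's i+1). *)
Definition Cplus (R : realType) (p : nat) (B : 'M[R]_p) (delta : 'I_p -> R)
    (i : 'I_p) : set 'rV[R]_p :=
  [set y | Hset B delta i y /\ delta i < pair y (row i B)].
Definition Cminus (R : realType) (p : nat) (B : 'M[R]_p) (delta : 'I_p -> R)
    (i : 'I_p) : set 'rV[R]_p :=
  [set y | Hset B delta i y /\ pair y (row i B) < delta i].

Definition represents (R : realType) (p : nat) (h : 'rV[R]_p -> \bar R)
    (B : 'M[R]_p) (delta : 'I_p -> R) (j : nat) : Prop :=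
  [/\ (j <= p)%N,
      forall i : 'I_p, (i < j)%N -> Cplus B delta i !=set0 /\ Cminus B delta i !=set0,
      forall i : 'I_p, (i < j)%N -> forall y, Cplus B delta i y -> h y = +oo%E,
      forall i : 'I_p, (i < j)%N -> forall y, Cminus B delta i y -> h y = -oo%E
    & (exists c : \bar R, forall y, Hset B delta j y -> h y = c) \/
      (exists (c : R) (w : 'rV[R]_p), forall y, Hset B delta j y -> h y = (c + pair y w)%R%:E)].

From HB Require Import structures.
From mathcomp Require Import all_boot all_order all_algebra.
From mathcomp Require Import all_classical all_reals all_analysis.
From mathcomp Require Import lra.
Import Order.TTheory GRing.Theory Num.Theory numFieldNormedType.Exports.
Local Open Scope ring_scope.
Local Open Scope classical_set_scope.

(* Write h_n y = c_n + sum_i b_{i,n} <y, eta_i> and let d_1, ..., d_p be the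
   basis of E dual to eta_1, ..., eta_p, so that h_n (y + t d_k) = h_n y + t b_{k,n}.
   A point y0 where h is finite lies in H_j (off H_j, h is infinite), and h_n y0
   converges.  For i <= j the point y0 + d_i lies in C_i^+, which forces
   b_{i,n} -> +oo; the point y0 + s d_i - e d_{i-1} lies in C_{i-1}^-, so
   s b_{i,n} < e b_{i-1,n} eventually for every real s and every e > 0, i.e.
   b_{i,n} / b_{i-1,n} -> 0.  For i > j the point y0 + d_i stays in H_j, where h
   is finite, so b_{i,n} converges, and then so does a_n. *)

Section Pairing.
Context {R : comUnitRingType} {p : nat}.
Implicit Types (y z e : 'rV[R]_p) (B : 'M[R]_p).

Lemma pairD y z e : pair (y + z) e = pair y e + pair z e.
Proof. by rewrite /pair -big_split /=; apply: eq_bigr => k _; rewrite !mxE mulrDl. Qed.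

Lemma pairZ (t : R) y e : pair (t *: y) e = t * pair y e.
Proof. by rewrite /pair mulr_sumr; apply: eq_bigr => k _; rewrite !mxE mulrA. Qed.

Lemma pair_row_trmx y B i : pair y (row i B) = (y *m B^T) 0 i.
Proof. by rewrite /pair mxE; apply: eq_bigr => k _; rewrite !mxE. Qed.

Lemma pair_mulmx y (b : 'rV[R]_p) B :
  pair y (b *m B) = \sum_i b 0 i * pair y (row i B).
Proof.
rewrite /pair; under eq_bigr do rewrite mxE big_distrr.
rewrite exchange_big; apply: eq_bigr => i _; rewrite big_distrr.
by apply: eq_bigr => k _ /=; rewrite !mxE mulrCA.
Qed.

Definition dual_basis B (k : 'I_p) : 'rV[R]_p := delta_mx 0 k *m invmx B^T.

Lemma pair_dual_basis B k i : B \in unitmx ->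
  pair (dual_basis B k) (row i B) = (i == k)%:R.
Proof. by move=> uB; rewrite pair_row_trmx mulmxKV ?unitmx_tr // mxE eqxx. Qed.

Lemma pair_translate B y t k i : B \in unitmx ->
  pair (y + t *: dual_basis B k) (row i B) = pair y (row i B) + t * (i == k)%:R.
Proof. by move=> uB; rewrite pairD pairZ pair_dual_basis. Qed.

Lemma affine_translate {f : 'rV[R]_p -> R} {B c} {b : 'I_p -> R} y t k :
  B \in unitmx -> (forall y, f y = c + \sum_i b i * pair y (row i B)) ->
  f (y + t *: dual_basis B k) = f y + t * b k.
Proof.
move=> uB fE; rewrite !fE; under eq_bigr do rewrite pair_translate // mulrDr.
rewrite big_split /= addrA.
under [X in _ + X]eq_bigr do rewrite mulrA mulr_natr mulrb.
by rewrite -big_mkcond big_pred1_eq mulrC.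
Qed.

End Pairing.

Lemma sum_split_offset (R : comRingType) (p j : nat) (b x d : 'I_p -> R) :
  \sum_i b i * x i = \sum_(i < p | (i < j)%N) b i * d i
    + \sum_(i < p | (i < j)%N) b i * (x i - d i)
    + \sum_(i < p | (j <= i)%N) b i * x i.
Proof.
rewrite (bigID (fun i : 'I_p => (i < j)%N)) /= -big_split /=.
under [X in _ = X + _]eq_bigr do rewrite -mulrDr addrC subrK.
by congr (_ + _); apply: eq_bigl => i; rewrite -leqNgt.
Qed.

Lemma affine_fun_coords {R : realType} {p : nat} {f : 'rV[R]_p -> R}
    {B : 'M[R]_p} :
  B \in unitmx -> affine_fun f ->
  exists c (b : 'I_p -> R), forall y, f y = c + \sum_i b i * pair y (row i B).
Proof.
move=> uB [c [w fE]]; exists c, (fun i => (w *m invmx B) 0 i) => y.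
by rewrite fE -pair_mulmx mulmxKV.
Qed.

Lemma affine_seq_coords {R : realType} {p : nat} {hs : nat -> 'rV[R]_p -> R}
    {B : 'M[R]_p} :
  B \in unitmx -> (forall n, affine_fun (hs n)) ->
  exists (c : nat -> R) (b : 'I_p -> nat -> R),
    forall n y, hs n y = c n + \sum_i b i n * pair y (row i B).
Proof.
move=> uB aff; have /choice[c /choice[b hsE]] n := affine_fun_coords uB (aff n).
by exists c, (fun i n => b n i).
Qed.

Section Representation.
Context {R : realType} {p : nat} {B : 'M[R]_p} {delta : 'I_p -> R}.
Hypothesis uB : B \in unitmx.

Lemma Hset_le {m m' y} : (m <= m')%N -> Hset B delta m' y -> Hset B delta m y.
Proof. by move=> mm' Hy k km; apply: Hy; exact: leq_trans km mm'. Qed.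

Lemma Hset_translate {m y t} {k : 'I_p} : (m <= k)%N ->
  Hset B delta m y -> Hset B delta m (y + t *: dual_basis B k).
Proof.
move=> mk Hy i im.
have /negbTE ik : i != k by rewrite -val_eqE neq_ltn (leq_trans im mk).
by rewrite pair_translate // ik mulr0 addr0 Hy.
Qed.

Lemma Cplus_translate {i : 'I_p} {y t} : Hset B delta i.+1 y -> 0 < t ->
  Cplus B delta i (y + t *: dual_basis B i).
Proof.
move=> Hy t0; split.
  by apply: Hset_translate => //; exact: Hset_le (leqnSn i) Hy.
by rewrite pair_translate // eqxx mulr1 Hy // ltrDl.
Qed.

Lemma Cminus_translate {i : 'I_p} {y t} : Hset B delta i.+1 y -> t < 0 ->
  Cminus B delta i (y + t *: dual_basis B i).
Proof.
move=> Hy t0; split.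
  by apply: Hset_translate => //; exact: Hset_le (leqnSn i) Hy.
by rewrite pair_translate // eqxx mulr1 Hy // gtrDl.
Qed.

Context {h : 'rV[R]_p -> \bar R} {j : nat}.
Hypothesis rep : represents h B delta j.

Lemma represents_Cplus {i : 'I_p} {y} :
  (i < j)%N -> Cplus B delta i y -> h y = +oo%E.
Proof. by case: rep => _ _ hCp _ _ ij; exact: hCp ij y. Qed.

Lemma represents_Cminus {i : 'I_p} {y} :
  (i < j)%N -> Cminus B delta i y -> h y = -oo%E.
Proof. by case: rep => _ _ _ hCm _ ij; exact: hCm ij y. Qed.

Lemma represents_fin_Hset {y} : h y \is a fin_num -> Hset B delta j y.
Proof.
move=> hy; suff Hm m : (m <= j)%N -> Hset B delta m y by exact: Hm.
elim: m => [_ k //|m IH mj k]; rewrite ltnS leq_eqVlt => /orP[/eqP km|]; last first.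
  by apply: IH; exact: ltnW.
have kj : (k < j)%N by rewrite km.
have Hk : Hset B delta k y by rewrite km; exact/IH/ltnW.
case: (ltgtP (pair y (row k B)) (delta k)) => // yk.
- by rewrite (represents_Cminus kj (conj Hk yk)) in hy.
- by rewrite (represents_Cplus kj (conj Hk yk)) in hy.
Qed.

Lemma represents_fin_on_Hset {y0 y} : h y0 \is a fin_num ->
  Hset B delta j y -> h y \is a fin_num.
Proof.
move=> hy0 Hy; have Hy0 := represents_fin_Hset hy0.
by case: rep => _ _ _ _ [[c hc]|[c [w hc]]]; rewrite hc // -(hc y0).
Qed.

End Representation.

Section Limits.
Context {T : Type} {F : set_system T} {FF : Filter F} {R : realType}.

Lemma cvge_translate {u v : T -> R} {l : R} {x : \bar R} :
  (u n)%:E @[n --> F] --> l%:E -> (u n + v n)%:E @[n --> F] --> x ->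
  (v n)%:E @[n --> F] --> (x - l%:E)%E.
Proof.
move=> ul uvx; have := cvgeB _ uvx ul; rewrite fin_num_adde_defl //.
by under eq_fun do rewrite -EFinB addrC addKr; apply.
Qed.

Lemma cvg_ratio0 {u v : T -> R} :
  (forall e, 0 < e -> forall s, \forall n \near F, s * v n < e * u n) ->
  v n / u n @[n --> F] --> 0.
Proof.
move=> small; apply/cvgr0Pnorm_lt => e e0; near=> n.
have vu : v n < e * u n by rewrite -[v n]mul1r; near: n; exact: small.
have Nvu : - v n < e * u n by rewrite -mulN1r; near: n; exact: small.
have u0 : 0 < u n by rewrite -(pmulr_rgt0 _ e0); lra.
rewrite normrM normfV (gtr0_norm u0) ltr_pdivrMr // ltr_norml.
by apply/andP; split; lra.
Unshelve. all: by end_near. Qed.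

End Limits.

Section AffineApproximation.
Context {R : realType} {p j : nat} {h : 'rV[R]_p -> \bar R}.
Context {B : 'M[R]_p} {delta : 'I_p -> R} {y0 : 'rV[R]_p}.
Context {hs : nat -> 'rV[R]_p -> R} {c : nat -> R} {b : 'I_p -> nat -> R}.
Hypotheses (uB : B \in unitmx) (rep : represents h B delta j).
Hypothesis hy0 : h y0 \is a fin_num.
Hypothesis hsE : forall n y, hs n y = c n + \sum_i b i n * pair y (row i B).
Hypothesis cvh : forall y, (hs n y)%:E @[n --> \oo] --> h y.

Let hs_translate n y t k : hs n (y + t *: dual_basis B k) = hs n y + t * b k n.
Proof. exact: affine_translate y t k uB (hsE n). Qed.

Let Hy0 : Hset B delta j y0 := represents_fin_Hset rep hy0.

Let cv0 : (hs n y0)%:E @[n --> \oo] --> (fine (h y0))%:E.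
Proof. by rewrite fineK //; exact: cvh. Qed.

Lemma translate_cvge {y} {v : nat -> R} : (forall n, hs n y = hs n y0 + v n) ->
  (v n)%:E @[n --> \oo] --> (h y - (fine (h y0))%:E)%E.
Proof.
by move=> hsy; have := cvh y; under eq_fun do rewrite hsy; exact: cvge_translate.
Qed.

Lemma coord_cvgry (i : 'I_p) : (i < j)%N -> b i n @[n --> \oo] --> +oo.
Proof.
move=> ij; apply/cvgeryP.
have hsy n : hs n (y0 + 1 *: dual_basis B i) = hs n y0 + b i n.
  by rewrite hs_translate mul1r.
have := translate_cvge hsy.
by rewrite (represents_Cplus rep ij (Cplus_translate uB (Hset_le ij Hy0) ltr01)).
Qed.

Lemma coord_ratio_cvg0 (i k : 'I_p) : k.+1 = i :> nat -> (i < j)%N ->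
  b i n / b k n @[n --> \oo] --> 0.
Proof.
move=> ki ij; have kj : (k < j)%N by apply: ltn_trans ij; rewrite -ki.
apply: cvg_ratio0 => e e0 s.
have Hk : Hset B delta k.+1 (y0 + s *: dual_basis B i).
  by apply: (Hset_translate uB); [rewrite -ki ltnSn | exact: Hset_le kj Hy0].
have hsy n : hs n (y0 + s *: dual_basis B i + (- e) *: dual_basis B k) =
    hs n y0 + (s * b i n + - e * b k n) by rewrite !hs_translate addrA.
have := translate_cvge hsy.
rewrite (represents_Cminus rep kj (Cminus_translate uB Hk _)) ?oppr_lt0 //.
move/cvgerNyP/cvgrNy_lt/(_ 0).
by apply: filterS => n; rewrite mulNr subr_lt0.
Qed.

Lemma coord_cvg (i : 'I_p) : (j <= i)%N -> cvgn (b i).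
Proof.
move=> ji; have Hy1 := Hset_translate uB (t := 1) ji Hy0.
have hsy n : hs n (y0 + 1 *: dual_basis B i) = hs n y0 + b i n.
  by rewrite hs_translate mul1r.
have := translate_cvge hsy.
by rewrite -(fineK (represents_fin_on_Hset rep hy0 Hy1)) => /fine_cvgP[_ /cvgP].
Qed.

Lemma offset_cvg : cvgn (fun n => c n + \sum_(i < p | (i < j)%N) b i n * delta i).
Proof.
have -> : (fun n => c n + \sum_(i < p | (i < j)%N) b i n * delta i) =
    fun n => hs n y0 - \sum_(i < p | (j <= i)%N) b i n * pair y0 (row i B).
  apply/funext => n.
  have mid0 : \sum_(i < p | (i < j)%N) b i n * (pair y0 (row i B) - delta i) = 0.
    by apply: big1 => i ij; rewrite Hy0 // subrr mulr0.
  by rewrite hsE (@sum_split_offset _ _ j _ _ delta) mid0 addr0 !addrA addrK.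
apply: is_cvgB; first by case/fine_cvgP: cv0 => _ /cvgP.
apply: cvgP; apply: (@cvg_big R _ +%R 0 _ add_continuous) => /= i ji.
by apply: cvgMl; exact: coord_cvg.
Qed.

End AffineApproximation.

Theorem lemma1 (R : realType) (p j : nat) (h : 'rV[R]_p -> \bar R)
    (B : 'M[R]_p) (delta : 'I_p -> R) (hs : nat -> 'rV[R]_p -> R) :
  gen_affine h ->
  (exists y0, h y0 \is a fin_num) ->
  B \in unitmx ->
  represents h B delta j ->
  (forall n, affine_fun (hs n)) ->
  (forall y, (fun n => (hs n y)%:E) @ \oo --> h y) ->
  exists (a : nat -> R) (b : 'I_p -> nat -> R),
    [/\ forall n y, hs n y = a n
          + \sum_(i < p | (i < j)%N) b i n * (pair y (row i B) - delta i)
          + \sum_(i < p | (j <= i)%N) b i n * pair y (row i B),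
        forall i : 'I_p, (i < j)%N -> b i n @[n --> \oo] --> +oo%R,
        forall i k : 'I_p, k.+1 = i :> nat -> (i < j)%N ->
          b i n / b k n @[n --> \oo] --> 0,
        forall i : 'I_p, (j <= i)%N -> cvgn (b i)
      & cvgn a].
Proof.
move=> _ [y0 hy0] uB rep aff cvh.
have [c [b hsE]] := affine_seq_coords uB aff.
exists (fun n => c n + \sum_(i < p | (i < j)%N) b i n * delta i), b; split.
- by move=> n y; rewrite hsE (@sum_split_offset _ _ j _ _ delta) !addrA.
- exact: (coord_cvgry uB rep hy0 hsE cvh).
- exact: (coord_ratio_cvg0 uB rep hy0 hsE cvh).
- exact: (coord_cvg uB rep hy0 hsE cvh).
- exact: (offset_cvg uB rep hy0 hsE cvh).
Qed.
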